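(* Let $\Diamond$ be a cellular decomposition of a surface into quadrilaterals, with complex cochains $C^k(\Diamond)$ and coboundary $d$, equipped with the products described in the context. Then $d$ is a derivation for these products: for all functions $f,g\in C^0(\Diamond)$ and every 1-form $\alpha\in C^1(\Diamond)$, $d(f\cdot g)=(df)\cdot g+f\cdot dg$ and $d(f\cdot\alpha)=df\wedge\alpha+f\cdot d\alpha$.
   Context: Products on $\Diamond$: for functions, $(f\cdot g)(x)=f(x)g(x)$; for a function and a 1-form, $\int_{(x,y)}f\cdot\alpha=\frac{f(x)+f(y)}{2}\int_{(x,y)}\alpha$ on each edge; for two 1-forms, on a positively oriented face $(x_1,x_2,x_3,x_4)$ (indices mod 4), $\iint\alpha\wedge\beta=\frac14\sum_{k=1}^4\Bigl(\int_{(x_{k-1},x_k)}\alpha\int_{(x_k,x_{k+1})}\beta-\int_{(x_{k+1},x_k)}\alpha\int_{(x_k,x_{k-1})}\beta\Bigr)$; for a function and a 2-form, $\iint_{(x_1,x_2,x_3,x_4)}f\cdot\omega=\frac{f(x_1)+f(x_2)+f(x_3)+f(x_4)}{4}\iint_{(x_1,x_2,x_3,x_4)}\omega$. The coboundary is given by Stokes: $\int_{(x,y)}df=f(y)-f(x)$, $\iint_F d\alpha=\oint_{\partial F}\alpha$. *)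

From HB Require Import structures.
From mathcomp Require Import all_boot all_order all_algebra.
From mathcomp Require Import complex.
From mathcomp Require Import reals.
Set Implicit Arguments. Unset Strict Implicit. Unset Printing Implicit Defensive.
Import Order.TTheory GRing.Theory Num.Theory.
Local Open Scope ring_scope.

(* A cellular decomposition of a surface into quadrilaterals, described
   combinatorially: vertices, faces, and for each face its four (distinct)
   vertices x_1..x_4 listed in positive (counterclockwise) order, indices
   taken mod 4 (ordS / ord_pred on 'I_4). *)
Record quad_complex := QuadComplex {
  qvert : Type;
  qface : Type;
  qbd : qface -> 'I_4 -> qvert;
  qbd_inj : forall F, injective (qbd F)
}.

Section Cochains.
Variable (R : realType) (Q : quad_complex).
Local Notation C := (R[i]).
Local Notation V := (qvert Q).
Local Notation F := (qface Q).
Local Notation v := (@qbd Q).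

(* the edge {x,y}, seen with orientation (x,y) *)
Definition is_edge (x y : V) : Prop :=
  exists (Fc : F) (k : 'I_4),
    (v Fc k = x /\ v Fc (ordS k) = y) \/ (v Fc (ordS k) = x /\ v Fc k = y).

(* cochains: C^0 = functions on vertices, C^1 = functions on oriented edges
   (alpha x y = integral of alpha over (x,y)), C^2 = functions on faces *)
Definition C0 := V -> C.
Definition C1 := V -> V -> C.
Definition C2 := F -> C.

Definition is_1form (a : C1) : Prop :=
  forall x y, is_edge x y -> a y x = - a x y.

Definition d0 (f : C0) : C1 := fun x y => f y - f x.
Definition d1 (a : C1) : C2 :=
  fun Fc => \sum_(k < 4) a (v Fc k) (v Fc (ordS k)).

Definition mul00 (f g : C0) : C0 := fun x => f x * g x.
Definition mul01 (f : C0) (a : C1) : C1 :=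
  fun x y => (f x + f y) / 2 * a x y.
Definition wedge11 (a b : C1) : C2 :=
  fun Fc => 4^-1 * \sum_(k < 4)
     (a (v Fc (ord_pred k)) (v Fc k) * b (v Fc k) (v Fc (ordS k))
      - a (v Fc (ordS k)) (v Fc k) * b (v Fc k) (v Fc (ord_pred k))).
Definition mul02 (f : C0) (w : C2) : C2 :=
  fun Fc => (\sum_(k < 4) f (v Fc k)) / 4 * w Fc.

End Cochains.

From HB Require Import structures.
From mathcomp Require Import all_boot all_order all_algebra.
From mathcomp Require Import complex.
From mathcomp Require Import reals.
From mathcomp Require Import ring.
Import GRing.Theory Num.Theory.
Local Open Scope ring_scope.

(* For a
   function f and a 1-form a on a face with vertex values f_k and edge values
   A_k = a(x_k, x_(k+1)), antisymmetry of a and a cyclic reindexing turn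
   df /\ a into (1/4) sum_k (f_k - f_(k-1) + f_(k+1) - f_(k+2)) A_k, while
   f . da is (1/4) sum_k (f_(k-1) + f_k + f_(k+1) + f_(k+2)) A_k, because the
   four neighbours of any k exhaust the face; the sum of the two is
   sum_k (f_k + f_(k+1))/2 A_k = d(f . a). *)

Lemma big_ordS {V : nmodType} {n : nat} (F : 'I_n -> V) :
  \sum_(k < n) F (ordS k) = \sum_(k < n) F k.
Proof. by rewrite [RHS](reindex_inj (@ordS_inj n)). Qed.

Lemma sum_ord4_around {V : nmodType} (F : 'I_4 -> V) (k : 'I_4) :
  \sum_(j < 4) F j = F (ord_pred k) + F k + F (ordS k) + F (ordS (ordS k)).
Proof.
have perm : perm_eq [:: ord_pred k; k; ordS k; ordS (ordS k)] (enum 'I_4).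
  rewrite perm_sym uniq_perm ?enum_uniq //; first by case: k => [[|[|[|[|m]]]] ?].
  move=> j; rewrite mem_enum !inE.
  by case: k => [[|[|[|[|m]]]] ?] //; case: j => [[|[|[|[|n]]]] ?].
by rewrite -big_enum /= -(perm_big _ perm) !big_cons big_nil /= addr0 !addrA.
Qed.

Lemma cyclic_leibniz4 {K : numFieldType} (fv A : 'I_4 -> K) :
  \sum_k (fv k + fv (ordS k)) / 2 * A k =
  4^-1 * \sum_k ((fv k - fv (ord_pred k)) * A k
                 + (fv k - fv (ordS k)) * A (ord_pred k))
  + (\sum_k fv k) / 4 * \sum_k A k.
Proof.
have shift : \sum_k (fv k - fv (ordS k)) * A (ord_pred k) =
             \sum_k (fv (ordS k) - fv (ordS (ordS k))) * A k.
  rewrite -(big_ordS (fun k => (fv k - fv (ordS k)) * A (ord_pred k))).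
  by under eq_bigr do rewrite ordSK.
have around : (\sum_k fv k) / 4 * \sum_k A k =
    \sum_k (fv (ord_pred k) + fv k + fv (ordS k) + fv (ordS (ordS k))) / 4 * A k.
  by rewrite mulr_sumr; apply: eq_bigr => k _; rewrite (sum_ord4_around fv k).
rewrite big_split /= shift -big_split /= around mulr_sumr -big_split /=.
apply: eq_bigr => k _.
have h2 : (2 : K) != 0 by rewrite pnatr_eq0.
have h4 : (4 : K) != 0 by rewrite pnatr_eq0.
by field.
Qed.

Section Leibniz.
Variables (R : realType) (Q : quad_complex).
Local Notation v := (@qbd Q).

Lemma d0_mul00 (f g : C0 R Q) (x y : qvert Q) :
  d0 (mul00 f g) x y = mul01 g (d0 f) x y + mul01 f (d0 g) x y.
Proof.
rewrite /d0 /mul00 /mul01.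
have h2 : (2 : R[i]) != 0 by rewrite pnatr_eq0.
by field.
Qed.

Lemma d1_mul01 (f : C0 R Q) (a : C1 R Q) (Fc : qface Q) (ha : is_1form a) :
  d1 (mul01 f a) Fc = wedge11 (d0 f) a Fc + mul02 f (d1 a) Fc.
Proof.
have a_pred k : a (v Fc k) (v Fc (ord_pred k)) =
                - a (v Fc (ord_pred k)) (v Fc (ordS (ord_pred k))).
  by rewrite ord_predK; apply: ha; exists Fc, (ord_pred k); left; rewrite ord_predK.
rewrite /d1 /mul01 /wedge11 /mul02 /d0.
have -> := cyclic_leibniz4 (fun k => f (v Fc k)) (fun k => a (v Fc k) (v Fc (ordS k))).
congr (_ * _ + _); apply: eq_bigr => k _.
by rewrite a_pred mulrN opprK.
Qed.

End Leibniz.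

Theorem mainTheorem15 (R : realType) (Q : quad_complex)
    (f g : C0 R Q) (a : C1 R Q) (ha : is_1form a) :
  (forall x y, is_edge x y ->
     d0 (mul00 f g) x y = mul01 g (d0 f) x y + mul01 f (d0 g) x y) /\
  (forall Fc : qface Q,
     d1 (mul01 f a) Fc = wedge11 (d0 f) a Fc + mul02 f (d1 a) Fc).
Proof.
split=> [x y _ | Fc]; [exact: d0_mul00 | exact: d1_mul01].
Qed.
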